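(* If $\beta_1>\beta_0$ and $\beta_2>\beta_0$, then the shape process $H^3$ is ergodic (positive recurrent).
   Context: For $\beta=(\beta_0,\beta_1,\beta_2)\in(0,\infty)^3$: for $x\in\mathbb{N}^3$, with zero boundary convention $x(0)=x(4)=0$, let $V_j(x)=\mathbf 1_{\{x(j-1)>x(j)\}}+\mathbf 1_{\{x(j+1)>x(j)\}}$. The crystal process $X^3$ is the continuous-time Markov chain on $\mathbb{N}^3$ jumping from $x$ to $x+e_j$ at rate $\beta_{V_j(x)}$ ($j=1,2,3$), no other transitions; the shape process is $H^3_t=(X^3_t(1)-X^3_t(2),X^3_t(2)-X^3_t(3))\in\mathbb{Z}^2$. *)

From Stdlib Require Import Reals ZArith List Lia Lra.
Import ListNotations.
Open Scope R_scope.

(* The crystal process X^3 on N^3 (as a rate description).           *)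
(* Zero boundary convention: x(0) = x(4) = 0.                        *)

Definition config := (nat * nat * nat)%type.

Definition coord (x : config) (i : nat) : nat :=
  match x, i with
  | (a, _, _), 1%nat => a
  | (_, b, _), 2%nat => b
  | (_, _, c), 3%nat => c
  | _, _ => 0%nat
  end.

Definition VX (x : config) (j : nat) : nat :=
  ((if Nat.ltb (coord x j) (coord x (j - 1)) then 1 else 0) +
   (if Nat.ltb (coord x j) (coord x (j + 1)) then 1 else 0))%nat.

Definition betaV (b0 b1 b2 : R) (v : nat) : R :=
  match v with 0%nat => b0 | 1%nat => b1 | _ => b2 end.

(* rate at which X^3 jumps from x to x + e_j, j = 1,2,3 *)
Definition rateX (b0 b1 b2 : R) (x : config) (j : nat) : R :=
  betaV b0 b1 b2 (VX x j).

Definition shape_state := (Z * Z)%type.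

Definition shape (x : config) : shape_state :=
  match x with (a, b, c) =>
    (Z.of_nat a - Z.of_nat b, Z.of_nat b - Z.of_nat c)%Z end.

(* Effect on the shape of the jump x -> x + e_j. *)
Definition shape_jump (h : shape_state) (j : nat) : shape_state :=
  match j with
  | 1%nat => ((fst h + 1)%Z, snd h)
  | 2%nat => ((fst h - 1)%Z, (snd h + 1)%Z)
  | _ => (fst h, (snd h - 1)%Z)
  end.

(* V_j expressed through the shape (x(0) = x(4) = 0 and x in N^3). *)
Definition VH (h : shape_state) (j : nat) : nat :=
  match j with
  | 1%nat => if Z.ltb (fst h) 0 then 1%nat else 0%nat
  | 2%nat => ((if Z.ltb 0 (fst h) then 1 else 0) +
              (if Z.ltb (snd h) 0 then 1 else 0))%nat
  | _ => if Z.ltb 0 (snd h) then 1%nat else 0%nat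
  end.

(* The jump rates of X^3 depend on x only through its shape, so H^3 is
   itself a continuous-time Markov chain on Z^2, with these rates. *)
Lemma shape_jump_correct (x : config) (j : nat) :
  (1 <= j <= 3)%nat ->
  shape (match x, j with
         | (a, b, c), 1%nat => (S a, b, c)
         | (a, b, c), 2%nat => (a, S b, c)
         | (a, b, c), _ => (a, b, S c)
         end) = shape_jump (shape x) j.
Proof.
  destruct x as [[a b] c]; intros Hj.
  destruct j as [|[|[|[|j]]]]; try lia; cbn [shape shape_jump fst snd];
  rewrite ?Nat2Z.inj_succ; f_equal; lia.
Qed.

Lemma VX_VH (x : config) (j : nat) :
  (1 <= j <= 3)%nat -> VX x j = VH (shape x) j.
Proof.
  destruct x as [[a b] c]; intros Hj.
  destruct j as [|[|[|[|j]]]]; try lia; unfold VX, VH; simpl;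
  repeat match goal with
  | |- context [Nat.ltb ?u ?v] => destruct (Nat.ltb_spec u v)
  | |- context [Z.ltb ?u ?v] => destruct (Z.ltb_spec u v)
  end; try reflexivity; lia.
Qed.

Definition rateH (b0 b1 b2 : R) (h : shape_state) (j : nat) : R :=
  betaV b0 b1 b2 (VH h j).

Lemma rateX_rateH b0 b1 b2 x j :
  (1 <= j <= 3)%nat -> rateX b0 b1 b2 x j = rateH b0 b1 b2 (shape x) j.
Proof. intros; unfold rateX, rateH; rewrite VX_VH; auto. Qed.

Definition qtot (b0 b1 b2 : R) (h : shape_state) : R :=
  rateH b0 b1 b2 h 1 + rateH b0 b1 b2 h 2 + rateH b0 b1 b2 h 3.

(* Path-space description: embedded jump chain + exponential holding *)
(* times (mean 1 / qtot).                                            *)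

Fixpoint all_paths (n : nat) : list (list nat) :=
  match n with
  | O => [ [] ]
  | S m => flat_map (fun p => [1%nat :: p; 2%nat :: p; 3%nat :: p]) (all_paths m)
  end.

Fixpoint visited (h : shape_state) (p : list nat) : list shape_state :=
  match p with
  | [] => [h]
  | j :: q => h :: visited (shape_jump h j) q
  end.

Fixpoint endpoint (h : shape_state) (p : list nat) : shape_state :=
  match p with
  | [] => h
  | j :: q => endpoint (shape_jump h j) q
  end.

Fixpoint path_prob (b0 b1 b2 : R) (h : shape_state) (p : list nat) : R :=
  match p with
  | [] => 1
  | j :: q => (rateH b0 b1 b2 h j / qtot b0 b1 b2 h) *
              path_prob b0 b1 b2 (shape_jump h j) q
  end.

Fixpoint path_time (b0 b1 b2 : R) (h : shape_state) (p : list nat) : R :=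
  match p with
  | [] => 0
  | j :: q => / qtot b0 b1 b2 h + path_time b0 b1 b2 (shape_jump h j) q
  end.

Definition Zpair_eqb (u v : shape_state) : bool :=
  Z.eqb (fst u) (fst v) && Z.eqb (snd u) (snd v).

Definition first_return (h : shape_state) (p : list nat) : bool :=
  match p with
  | [] => false
  | j :: q =>
      Zpair_eqb (endpoint h p) h &&
      forallb (fun g => negb (Zpair_eqb g h))
              (removelast (visited (shape_jump h j) q))
  end.

Fixpoint sumR (l : list R) : R :=
  match l with [] => 0 | a :: t => a + sumR t end.

Definition ret_prob (b0 b1 b2 : R) (h : shape_state) (n : nat) : R :=
  sumR (map (fun p => if first_return h p then path_prob b0 b1 b2 h p else 0)
            (all_paths n)).

Definition ret_time (b0 b1 b2 : R) (h : shape_state) (n : nat) : R :=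
  sumR (map (fun p => if first_return h p
                      then path_prob b0 b1 b2 h p * path_time b0 b1 b2 h p
                      else 0)
            (all_paths n)).

(* h is positive recurrent for H^3: the return time T_h^+ is a.s. finite
   (the first-return probabilities sum to 1) and E_h[T_h^+] < infinity. *)
Definition positive_recurrent_state (b0 b1 b2 : R) (h : shape_state) : Prop :=
  Un_cv (fun N => sum_f_R0 (ret_prob b0 b1 b2 h) N) 1 /\
  exists m : R, Un_cv (fun N => sum_f_R0 (ret_time b0 b1 b2 h) N) m.

(* H^3 is ergodic (positive recurrent): every state is positive recurrent
   (H^3 is irreducible on Z^2, so this is the class property). *)
Definition shape_positive_recurrent (b0 b1 b2 : R) : Prop :=
  forall h : shape_state, positive_recurrent_state b0 b1 b2 h.

From Stdlib Require Import Reals ZArith List Lia Lra Bool.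
Open Scope R_scope.

(* Work with the embedded jump chain of H^3 on Z^2 (moves 1, 2, 3 with
   probabilities rateH / qtot) and a fixed target state h.  For the chain
   killed on entering h, let [surv n g] = P_g(no visit to h at jumps 1..n)
   and [tmean N g] = sum_{n<N} surv n g = E_g[min(T_h, N)].

   1. General facts on the killed chain with arbitrary jump probabilities:
      the recursion for [tmean], a Foster-Lyapunov bound
      [tmean N g <= K + V g] from a drift condition, and an escape estimate
      saying that h is hit within [k] jumps with probability >= eps^k from any
      state at potential distance <= k (the potential [psig] decreases by one
      along a suitable move).
   2. For the crystal rates with b1, b2 > b0, the quadratic form
      V(x,y) = x^2 + xy + y^2 has drift <= -1 outside a finite ball, and all
      move probabilities are bounded below; hence [tmean N h] is bounded in N.
   3. Path-space identification: [ret_prob] is the increment of [surv] and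
      [ret_time] is dominated by n * ret_prob, so a bounded [tmean] gives
      P_h(T_h^+ < oo) = 1 and E_h[T_h^+] < oo. *)

Ltac case_ifs :=
  repeat match goal with |- context [if ?b then _ else _] => destruct b end.

Lemma Zpair_eqb_spec (u v : shape_state) : Zpair_eqb u v = true <-> u = v.
Proof.
  destruct u as [a b], v as [c d]; unfold Zpair_eqb; simpl.
  rewrite Bool.andb_true_iff, !Z.eqb_eq; split.
  - intros [-> ->]; auto.
  - intros H; inversion H; auto.
Qed.

Lemma jump_neq (g : shape_state) (j : nat) :
  (j = 1 \/ j = 2 \/ j = 3)%nat -> Zpair_eqb (shape_jump g j) g = false.
Proof.
  intros Hj. destruct (Zpair_eqb (shape_jump g j) g) eqn:E; auto.
  apply Zpair_eqb_spec in E. destruct g as [a b].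
  destruct Hj as [ -> | [ -> | -> ] ]; simpl in E; inversion E; lia.
Qed.

(* A potential measuring how many moves separate g from h: it vanishes only
   at h, is at most 4 times the l1-distance, and from any g <> h some move
   decreases it by exactly one. *)
Definition psig (h g : shape_state) : Z :=
  let a := (fst h - fst g)%Z in let b := (snd h - snd g)%Z in
  (a - b + 3 * Z.max 0 (Z.max (- a) b))%Z.

Lemma psig_pos h g : g <> h -> (1 <= psig h g)%Z.
Proof.
  destruct h as [h1 h2], g as [g1 g2]; unfold psig; cbn [fst snd]; intros Hne.
  destruct (Z.eq_dec g1 h1), (Z.eq_dec g2 h2); [congruence| lia..].
Qed.

Lemma psig_le h g : (psig h g <= 4 * (Z.abs (fst h - fst g) + Z.abs (snd h - snd g)))%Z.
Proof. unfold psig; lia. Qed.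

Lemma psig_step h g : g <> h -> exists j, (j = 1 \/ j = 2 \/ j = 3)%nat /\
   psig h (shape_jump g j) = (psig h g - 1)%Z.
Proof.
  destruct h as [h1 h2], g as [g1 g2]; intros Hne; unfold psig; cbn [fst snd shape_jump].
  assert (Hab : h1 <> g1 \/ h2 <> g2).
  { destruct (Z.eq_dec h1 g1), (Z.eq_dec h2 g2); [congruence | auto..]. }
  destruct (Z_le_gt_dec 1 (h1 - g1)).
  { exists 1%nat; split; auto; cbn [fst snd shape_jump]; lia. }
  destruct (Z_le_gt_dec (h2 - g2 + 1) (Z.max 0 (- (h1 - g1)))).
  { exists 3%nat; split; auto; cbn [fst snd shape_jump]; lia. }
  exists 2%nat; split; auto; cbn [fst snd shape_jump]; lia.
Qed.

Lemma psig_self_jump h j : (j = 1 \/ j = 2 \/ j = 3)%nat -> psig h (shape_jump h j) = 2%Z.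
Proof.
  destruct h as [h1 h2]; intros [ -> | [ -> | -> ] ]; unfold psig; cbn [fst snd shape_jump]; lia.
Qed.

Section KilledJumpChain.

Variable P : shape_state -> nat -> R.
Hypothesis P_nonneg : forall g j, 0 <= P g j.
Hypothesis P_sum : forall g, P g 1 + P g 2 + P g 3 = 1.

Definition mean_step (f : shape_state -> R) (g : shape_state) : R :=
  P g 1 * f (shape_jump g 1) + P g 2 * f (shape_jump g 2) + P g 3 * f (shape_jump g 3).

Variable h : shape_state.

Definition killed (g : shape_state) (j : nat) (f : shape_state -> R) : R :=
  if Zpair_eqb (shape_jump g j) h then 0 else f (shape_jump g j).

Definition kstep (f : shape_state -> R) (g : shape_state) : R :=
  P g 1 * killed g 1 f + P g 2 * killed g 2 f + P g 3 * killed g 3 f.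

Fixpoint kiter (n : nat) (f : shape_state -> R) (g : shape_state) : R :=
  match n with
  | O => f g
  | S m => kstep (kiter m f) g
  end.

Definition surv (n : nat) (g : shape_state) : R := kiter n (fun _ => 1) g.

Fixpoint tmean (N : nat) (g : shape_state) : R :=
  match N with
  | O => 0
  | S M => tmean M g + surv M g
  end.

Lemma kstep_ext f f' g : (forall x, f x = f' x) -> kstep f g = kstep f' g.
Proof. intros H; unfold kstep, killed; rewrite !H; reflexivity. Qed.

Lemma kstep_lin a f f' g :
  kstep (fun x => a * f x + f' x) g = a * kstep f g + kstep f' g.
Proof. unfold kstep, killed; case_ifs; ring. Qed.

Lemma kstep_mono f f' g : (forall x, f x <= f' x) -> kstep f g <= kstep f' g.
Proof.
  intros H; unfold kstep, killed.
  pose proof (P_nonneg g 1); pose proof (P_nonneg g 2); pose proof (P_nonneg g 3).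
  repeat apply Rplus_le_compat; apply Rmult_le_compat_l; auto; case_ifs; auto; lra.
Qed.

Lemma kstep_bound f c g : (forall x, 0 <= f x <= c) -> 0 <= kstep f g <= c.
Proof.
  intros H; pose proof (P_sum g); unfold kstep, killed.
  pose proof (P_nonneg g 1); pose proof (P_nonneg g 2); pose proof (P_nonneg g 3).
  assert (0 <= c) by (destruct (H g); lra).
  case_ifs;
  repeat match goal with |- context [f ?x] => destruct (H x); generalize dependent (f x); intros end;
  nra.
Qed.

(* Killing only removes mass from a nonnegative function. *)
Lemma kstep_le_mean_step f g : (forall x, 0 <= f x) -> kstep f g <= mean_step f g.
Proof.
  intros H; unfold kstep, mean_step, killed.
  pose proof (P_nonneg g 1); pose proof (P_nonneg g 2); pose proof (P_nonneg g 3).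
  repeat apply Rplus_le_compat; apply Rmult_le_compat_l; auto; case_ifs; auto; lra.
Qed.

Lemma kstep_escape f g j q : (j = 1 \/ j = 2 \/ j = 3)%nat ->
  (forall x, 0 <= f x <= 1) -> killed g j f <= 1 - q ->
  kstep f g <= 1 - P g j * q.
Proof.
  intros Hj Hf Hq; pose proof (P_sum g); unfold kstep.
  pose proof (P_nonneg g 1); pose proof (P_nonneg g 2); pose proof (P_nonneg g 3).
  assert (Hk : forall i, 0 <= killed g i f <= 1).
  { intros i; unfold killed; case_ifs; [lra | apply Hf]. }
  pose proof (Hk 1%nat); pose proof (Hk 2%nat); pose proof (Hk 3%nat).
  destruct Hj as [ -> | [ -> | -> ] ]; nra.
Qed.

Lemma kiter_mono n f f' : (forall x, f x <= f' x) -> forall g, kiter n f g <= kiter n f' g.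
Proof. intros H; induction n; intros g; simpl; auto. apply kstep_mono; auto. Qed.

Lemma kiter_lin_const n (K : R) f g :
  kiter n (fun x => K + f x) g = K * surv n g + kiter n f g.
Proof.
  revert g; induction n; intros g; unfold surv; simpl; [ring|].
  rewrite (kstep_ext _ (fun x => K * kiter n (fun _ => 1) x + kiter n f x)).
  - apply kstep_lin.
  - intros x; apply IHn.
Qed.

Lemma surv_bound n g : 0 <= surv n g <= 1.
Proof.
  revert g; induction n; intros g; unfold surv; simpl; [lra|]. apply kstep_bound; auto.
Qed.

Lemma surv_S n g : surv (S n) g = kstep (surv n) g.
Proof. reflexivity. Qed.

Lemma surv_decr n g : surv (S n) g <= surv n g.
Proof.
  revert g; induction n; intros g.
  - apply surv_bound.
  - rewrite !surv_S; apply kstep_mono; auto.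
Qed.

Lemma tmean_S N g : tmean (S N) g = 1 + kstep (tmean N) g.
Proof.
  revert g; induction N; intros g.
  - simpl; unfold surv; simpl; unfold kstep, killed; case_ifs; ring.
  - change (tmean (S (S N)) g) with (tmean (S N) g + surv (S N) g).
    rewrite IHN, surv_S,
      (kstep_ext (tmean (S N)) (fun x => 1 * tmean N x + surv N x)) by (intros; simpl; ring).
    rewrite kstep_lin; ring.
Qed.

(* Markov property at time L. *)
Lemma tmean_split L N g : tmean (L + N) g = tmean L g + kiter L (tmean N) g.
Proof.
  revert g; induction L; intros g; [simpl; ring|].
  change (S L + N)%nat with (S (L + N)). rewrite !tmean_S.
  rewrite (kstep_ext (tmean (L + N)) (fun x => 1 * tmean L x + kiter L (tmean N) x))
    by (intros; rewrite IHL; ring).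
  rewrite kstep_lin; simpl; ring.
Qed.

Lemma tmean_le_N N g : tmean N g <= INR N.
Proof.
  induction N; [simpl; lra|]. pose proof (surv_bound N g).
  rewrite S_INR; simpl; lra.
Qed.

(* Since surv is nonincreasing, (n+1) P(T_h > n) <= E[min(T_h, n+1)]. *)
Lemma surv_le_tmean n g : INR (S n) * surv n g <= tmean (S n) g.
Proof.
  induction n; [simpl; lra|].
  change (tmean (S (S n)) g) with (tmean (S n) g + surv (S n) g).
  pose proof (surv_decr n g); pose proof (surv_bound (S n) g); pose proof (pos_INR (S n)).
  rewrite S_INR; nra.
Qed.

(* Escape estimate: if every move has probability >= eps, then from a state
   at potential 1 <= psig h g <= k the chain hits h within k jumps with
   probability >= eps^k (greedy path decreasing the potential). *)
Section Escape.
Variable eps : R.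
Hypothesis eps_nonneg : 0 <= eps.
Hypothesis P_lower : forall g j, (j = 1 \/ j = 2 \/ j = 3)%nat -> eps <= P g j.

Lemma eps_pow_bound k : 0 <= eps ^ k <= 1.
Proof.
  assert (eps <= 1).
  { pose proof (P_lower h 1%nat ltac:(auto)); pose proof (P_sum h).
    pose proof (P_nonneg h 2); pose proof (P_nonneg h 3); lra. }
  split; [apply pow_le; auto | rewrite <- (pow1 k); apply pow_incr; lra].
Qed.

Lemma escape k : forall g m, (1 <= psig h g <= Z.of_nat k)%Z -> (k <= m)%nat ->
  surv m g <= 1 - eps ^ k.
Proof.
  induction k as [|k IH]; intros g m Hp Hkm; [lia|].
  destruct m as [|m]; [lia|].
  assert (Hgh : g <> h) by (intros ->; unfold psig in Hp; lia).
  destruct (psig_step h g Hgh) as [j [Hj Hps]].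
  assert (Hkill : killed g j (surv m) <= 1 - eps ^ k).
  { pose proof (eps_pow_bound k). unfold killed.
    destruct (Zpair_eqb (shape_jump g j) h) eqn:E; [lra|].
    apply IH; [|lia].
    assert (Hne : shape_jump g j <> h) by (intros Hc; apply Zpair_eqb_spec in Hc; congruence).
    pose proof (psig_pos h _ Hne); lia. }
  rewrite surv_S.
  eapply Rle_trans; [apply (kstep_escape _ _ j (eps ^ k)); auto; intros; apply surv_bound|].
  simpl pow; apply Rplus_le_compat_l, Ropp_le_contravar, Rmult_le_compat_r;
    [apply eps_pow_bound | apply P_lower; auto].
Qed.

(* Hitting within k+1 jumps from any state at potential <= k, including h
   itself (whose neighbours all have potential 2). *)
Lemma surv_hit k g : (2 <= k)%nat -> (psig h g <= Z.of_nat k)%Z ->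
  surv (S k) g <= 1 - eps ^ S k.
Proof.
  intros Hk Hp.
  destruct (Zpair_eqb g h) eqn:E.
  - apply Zpair_eqb_spec in E; subst g.
    rewrite surv_S.
    assert (Hnext : killed h 1 (surv k) <= 1 - eps ^ k).
    { unfold killed; rewrite jump_neq by auto.
      apply escape; [rewrite psig_self_jump by auto; lia | lia]. }
    eapply Rle_trans; [apply (kstep_escape _ _ 1%nat (eps ^ k)); auto; intros; apply surv_bound|].
    simpl pow; apply Rplus_le_compat_l, Ropp_le_contravar, Rmult_le_compat_r;
      [apply eps_pow_bound | apply P_lower; auto].
  - assert (Hne : g <> h) by (intros ->; rewrite (proj2 (Zpair_eqb_spec h h)) in E; congruence).
    apply escape; [pose proof (psig_pos h g Hne); lia | lia].
Qed.

End Escape.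

Section Foster.
Variable V : shape_state -> R.
Hypothesis V_nonneg : forall g, 0 <= V g.
Hypothesis V_drift : forall g, mean_step V g <= V g + 1.
Variable B : shape_state -> bool.
Hypothesis V_drift_out : forall g, B g = false -> mean_step V g <= V g - 1.
Variables (L : nat) (eta : R).
Hypothesis L_pos : (1 <= L)%nat.
Hypothesis eta_range : 0 < eta <= 1.
Hypothesis hit_in : forall g, B g = true -> surv L g <= 1 - eta.

Lemma kiter_V n g : kiter n V g <= V g + INR n.
Proof.
  revert g; induction n; intros g; simpl kiter; [simpl; lra|].
  rewrite S_INR.
  eapply Rle_trans; [apply kstep_mono; exact IHn|].
  rewrite (kstep_ext _ (fun x => 1 * V x + INR n)) by (intros; simpl; ring).
  rewrite kstep_lin.
  pose proof (Rle_trans _ _ _ (kstep_le_mean_step V g V_nonneg) (V_drift g)).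
  destruct (kstep_bound (fun _ => INR n) (INR n) g); [intros; pose proof (pos_INR n); lra|].
  lra.
Qed.

Lemma tmean_foster N g : tmean N g <= 2 * INR L / eta + V g.
Proof.
  set (K := 2 * INR L / eta).
  assert (HK : K * eta = 2 * INR L) by (unfold K; field; lra).
  assert (HLK : INR L <= K) by (pose proof (pos_INR L); nra).
  assert (HK0 : 0 <= K) by (pose proof (pos_INR L); lra).
  revert N g. induction N as [N IH] using (well_founded_induction lt_wf); intros g.
  pose proof (V_nonneg g).
  destruct (B g) eqn:HB.
  - destruct (le_lt_dec N L) as [HNL|HNL].
    + pose proof (tmean_le_N N g); apply le_INR in HNL; lra.
    + replace N with (L + (N - L))%nat by lia. rewrite tmean_split.
      assert (Hq : kiter L (tmean (N - L)) g <= kiter L (fun x => K + V x) g)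
        by (apply kiter_mono; intros x; apply IH; lia).
      rewrite kiter_lin_const in Hq.
      pose proof (tmean_le_N L g); pose proof (kiter_V L g); pose proof (hit_in g HB).
      assert (K * surv L g <= K * (1 - eta)) by (apply Rmult_le_compat_l; lra).
      nra.
  - destruct N as [|N]; [simpl; lra|].
    rewrite tmean_S.
    assert (Hq : kstep (tmean N) g <= kstep (fun x => K * 1 + V x) g)
      by (apply kstep_mono; intros x; rewrite Rmult_1_r; apply IH; lia).
    rewrite (kstep_lin K (fun _ => 1) V) in Hq.
    destruct (kstep_bound (fun _ => 1) 1 g); [intros; lra|].
    pose proof (Rle_trans _ _ _ (kstep_le_mean_step V g V_nonneg) (V_drift_out g HB)).
    nra.
Qed.

End Foster.

End KilledJumpChain.

Lemma sumR_ext {A} (F G : A -> R) l : (forall x, F x = G x) -> sumR (map F l) = sumR (map G l).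
Proof. intros H; induction l; simpl; auto. rewrite H, IHl; auto. Qed.

Lemma sumR_le {A} (F G : A -> R) l :
  (forall x, In x l -> F x <= G x) -> sumR (map F l) <= sumR (map G l).
Proof. intros H; induction l; simpl; [lra|]. apply Rplus_le_compat; auto with datatypes. Qed.

Lemma sumR_nonneg {A} (F : A -> R) l : (forall x, 0 <= F x) -> 0 <= sumR (map F l).
Proof. intros H; induction l; simpl; [lra|]. pose proof (H a); lra. Qed.

Lemma sumR_plus {A} (F G : A -> R) l :
  sumR (map (fun x => F x + G x) l) = sumR (map F l) + sumR (map G l).
Proof. induction l; simpl; [ring | rewrite IHl; ring]. Qed.

Lemma sumR_scal {A} (F : A -> R) c l : sumR (map (fun x => c * F x) l) = c * sumR (map F l).
Proof. induction l; simpl; [ring | rewrite IHl; ring]. Qed.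

Lemma sumR_all_paths_S (F : list nat -> R) n :
  sumR (map F (all_paths (S n))) =
  sumR (map (fun p => F (1%nat :: p) + F (2%nat :: p) + F (3%nat :: p)) (all_paths n)).
Proof.
  simpl all_paths. induction (all_paths n) as [|p l IH]; simpl; [reflexivity|].
  rewrite IH; ring.
Qed.

Lemma all_paths_length n p : In p (all_paths n) -> length p = n.
Proof.
  revert p; induction n; intros p Hp; simpl in Hp.
  - destruct Hp as [<-|[]]; auto.
  - apply in_flat_map in Hp. destruct Hp as [q [Hq Hin]].
    simpl in Hin; destruct Hin as [<-|[<-|[<-|[]]]]; simpl; rewrite (IHn q Hq); auto.
Qed.

Section CrystalRates.

Variables b0 b1 b2 : R.
Hypothesis b0_pos : 0 < b0.
Hypothesis b1_gt : b0 < b1.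
Hypothesis b2_gt : b0 < b2.

Lemma rateH_bounds g j : b0 <= rateH b0 b1 b2 g j <= b0 + b1 + b2.
Proof. unfold rateH, betaV; destruct (VH g j) as [|[|]]; lra. Qed.

Lemma qtot_bounds g : 3 * b0 <= qtot b0 b1 b2 g <= 3 * (b0 + b1 + b2).
Proof.
  unfold qtot; pose proof (rateH_bounds g 1); pose proof (rateH_bounds g 2);
  pose proof (rateH_bounds g 3); lra.
Qed.

Definition jprob (g : shape_state) (j : nat) : R := rateH b0 b1 b2 g j / qtot b0 b1 b2 g.

Lemma jprob_nonneg g j : 0 <= jprob g j.
Proof.
  unfold jprob; pose proof (qtot_bounds g); pose proof (rateH_bounds g j).
  apply Rle_mult_inv_pos; lra.
Qed.

Lemma jprob_sum g : jprob g 1 + jprob g 2 + jprob g 3 = 1.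
Proof.
  unfold jprob; pose proof (qtot_bounds g).
  unfold Rdiv; rewrite <- !Rmult_plus_distr_r; fold (qtot b0 b1 b2 g).
  apply Rinv_r; lra.
Qed.

Definition pmin : R := b0 / (3 * (b0 + b1 + b2)).

Lemma pmin_pos : 0 < pmin.
Proof. unfold pmin; apply Rdiv_lt_0_compat; lra. Qed.

Lemma jprob_ge g j : pmin <= jprob g j.
Proof.
  unfold jprob, pmin; pose proof (qtot_bounds g); pose proof (rateH_bounds g j).
  apply Rle_trans with (b0 / qtot b0 b1 b2 g); unfold Rdiv.
  - apply Rmult_le_compat_l; [lra|]. apply Rinv_le_contravar; lra.
  - apply Rmult_le_compat_r; [left; apply Rinv_0_lt_compat|]; lra.
Qed.

Definition Vf (g : shape_state) : R :=
  let x := IZR (fst g) in let y := IZR (snd g) in x * x + x * y + y * y.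

Lemma Vf_nonneg g : 0 <= Vf g.
Proof. unfold Vf; nra. Qed.

Lemma Vf_jumps g :
  let x := IZR (fst g) in let y := IZR (snd g) in
  Vf (shape_jump g 1) = Vf g + (2 * x + y) + 1 /\
  Vf (shape_jump g 2) = Vf g + (y - x) + 1 /\
  Vf (shape_jump g 3) = Vf g + (- x - 2 * y) + 1.
Proof.
  destruct g as [a b]; unfold Vf; simpl.
  rewrite ?plus_IZR, ?minus_IZR; repeat split; ring.
Qed.

Definition gap : R := Rmin (b1 - b0) (b2 - b0).

Lemma gap_pos : 0 < gap.
Proof. unfold gap; apply Rmin_glb_lt; lra. Qed.

(* The rate-weighted linear increment of Vf is <= -gap * |g|_1: this is
   where b1, b2 > b0 enters (case analysis on the signs of x and y). *)
Lemma linear_drift g :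
  let x := IZR (fst g) in let y := IZR (snd g) in
  rateH b0 b1 b2 g 1 * (2 * x + y) + rateH b0 b1 b2 g 2 * (y - x)
    + rateH b0 b1 b2 g 3 * (- x - 2 * y) <= - gap * (Rabs x + Rabs y).
Proof.
  destruct g as [a b]; simpl.
  pose proof (Rmin_l (b1 - b0) (b2 - b0)); pose proof (Rmin_r (b1 - b0) (b2 - b0)).
  pose proof gap_pos. unfold gap in *.
  set (d := Rmin (b1 - b0) (b2 - b0)) in *.
  unfold rateH, VH; simpl.
  destruct (Z.ltb_spec a 0) as [Ha|Ha]; destruct (Z.ltb_spec 0 a) as [Ha'|Ha'];
  destruct (Z.ltb_spec b 0) as [Hb|Hb]; destruct (Z.ltb_spec 0 b) as [Hb'|Hb']; try lia;
  simpl betaV;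
  repeat match goal with
  | H : (?u < ?v)%Z |- _ => apply IZR_lt in H
  | H : (?u <= ?v)%Z |- _ => apply IZR_le in H
  end;
  set (x := IZR a) in *; set (y := IZR b) in *;
  repeat match goal with |- context [Rabs ?z] =>
    let H := fresh in destruct (Rle_lt_dec 0 z) as [H|H];
    [rewrite (Rabs_pos_eq z H) | rewrite (Rabs_left z H)] end;
  try (assert (x = 0) by lra); try (assert (y = 0) by lra); nra.
Qed.

Definition norm1 (g : shape_state) : Z := (Z.abs (fst g) + Z.abs (snd g))%Z.

Lemma Vf_drift g :
  mean_step jprob Vf g <= Vf g + 1 - gap * IZR (norm1 g) / qtot b0 b1 b2 g.
Proof.
  pose proof (linear_drift g) as Hr; simpl in Hr.
  destruct (Vf_jumps g) as [E1 [E2 E3]].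
  unfold mean_step, jprob; rewrite E1, E2, E3.
  pose proof (qtot_bounds g).
  unfold norm1; rewrite plus_IZR, !abs_IZR. unfold qtot in *.
  set (r1 := rateH b0 b1 b2 g 1) in *. set (r2 := rateH b0 b1 b2 g 2) in *.
  set (r3 := rateH b0 b1 b2 g 3) in *.
  set (x := IZR (fst g)) in *. set (y := IZR (snd g)) in *.
  assert (Heq : r1 / (r1 + r2 + r3) * (Vf g + (2 * x + y) + 1) +
    r2 / (r1 + r2 + r3) * (Vf g + (y - x) + 1) + r3 / (r1 + r2 + r3) * (Vf g + (- x - 2 * y) + 1)
    = Vf g + 1 + (r1 * (2 * x + y) + r2 * (y - x) + r3 * (- x - 2 * y)) / (r1 + r2 + r3))
    by (field; lra).
  rewrite Heq.
  assert ((r1 * (2 * x + y) + r2 * (y - x) + r3 * (- x - 2 * y)) / (r1 + r2 + r3)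
          <= - gap * (Rabs x + Rabs y) / (r1 + r2 + r3)).
  { unfold Rdiv; apply Rmult_le_compat_r; auto. left; apply Rinv_0_lt_compat; lra. }
  unfold Rdiv in *; lra.
Qed.

Lemma Vf_drift_le g : mean_step jprob Vf g <= Vf g + 1.
Proof.
  pose proof (Vf_drift g); pose proof gap_pos; pose proof (qtot_bounds g).
  assert (0 <= gap * IZR (norm1 g) / qtot b0 b1 b2 g).
  { apply Rle_mult_inv_pos; [|lra]. apply Rmult_le_pos; [lra|].
    apply IZR_le; unfold norm1; lia. }
  lra.
Qed.

Definition drift_radius : Z := up (6 * (b0 + b1 + b2) / gap).

Lemma Vf_drift_out g : (drift_radius < norm1 g)%Z -> mean_step jprob Vf g <= Vf g - 1.
Proof.
  intros Hout. pose proof (Vf_drift g); pose proof gap_pos; pose proof (qtot_bounds g).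
  apply IZR_lt in Hout. destruct (archimed (6 * (b0 + b1 + b2) / gap)) as [Ha _].
  unfold drift_radius in Hout.
  assert (6 * (b0 + b1 + b2) < gap * IZR (norm1 g)).
  { replace (6 * (b0 + b1 + b2)) with (gap * (6 * (b0 + b1 + b2) / gap)) by (field; lra).
    apply Rmult_lt_compat_l; lra. }
  assert (2 <= gap * IZR (norm1 g) / qtot b0 b1 b2 g).
  { apply Rmult_le_reg_r with (qtot b0 b1 b2 g); [lra|].
    unfold Rdiv; rewrite Rmult_assoc, Rinv_l by lra; lra. }
  lra.
Qed.

(* The expected truncated hitting time of h from h is bounded uniformly in N:
   apply the Foster bound with B the l1-ball of radius R around 0 containing
   h, in which h is hit within 8R+3 jumps with probability >= pmin^(8R+3). *)
Lemma tmean_bounded h : exists C, forall N, tmean jprob h N h <= C.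
Proof.
  set (R := Z.max (norm1 h) drift_radius).
  set (k := S (S (Z.to_nat (8 * R)))).
  set (B := fun g => Z.leb (norm1 g) R).
  pose proof pmin_pos.
  exists (2 * INR (S k) / pmin ^ S k + Vf h); intros N.
  apply (tmean_foster jprob jprob_nonneg jprob_sum h Vf Vf_nonneg Vf_drift_le B).
  - intros g Hg; apply Vf_drift_out; unfold B, R in *; apply Z.leb_gt in Hg; lia.
  - lia.
  - split; [apply pow_lt; lra|].
    rewrite <- (pow1 (S k)); apply pow_incr; split; [lra|].
    pose proof (jprob_ge h 1); pose proof (jprob_sum h).
    pose proof (jprob_nonneg h 2); pose proof (jprob_nonneg h 3); lra.
  - intros g Hg; apply Z.leb_le in Hg.
    apply (surv_hit jprob jprob_nonneg jprob_sum h pmin); [lra | intros; apply jprob_ge | lia|].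
    assert (Hk : Z.of_nat k = (8 * R + 2)%Z).
    { unfold k; rewrite !Nat2Z.inj_succ, Z2Nat.id; [lia|]. unfold R, norm1; lia. }
    pose proof (psig_le h g). unfold B, R, norm1 in *. lia.
Qed.


Lemma path_prob_nonneg g p : 0 <= path_prob b0 b1 b2 g p.
Proof.
  revert g; induction p as [|j p IH]; intros g; simpl; [lra|].
  apply Rmult_le_pos; [apply jprob_nonneg | apply IH].
Qed.

(* Each holding time has mean at most 1 / (3 b0). *)
Lemma path_time_bound g p : 0 <= path_time b0 b1 b2 g p <= INR (length p) / (3 * b0).
Proof.
  revert g; induction p as [|j p IH]; intros g; simpl length; simpl path_time; [simpl; lra|].
  rewrite S_INR. destruct (IH (shape_jump g j)).
  pose proof (qtot_bounds g).
  assert (0 < / qtot b0 b1 b2 g) by (apply Rinv_0_lt_compat; lra).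
  assert (/ qtot b0 b1 b2 g <= / (3 * b0)) by (apply Rinv_le_contravar; lra).
  unfold Rdiv in *; lra.
Qed.

Section ReturnTimes.

Variable h : shape_state.

Definition first_hit (g : shape_state) (q : list nat) : bool :=
  Zpair_eqb (endpoint g q) h &&
  forallb (fun x => negb (Zpair_eqb x h)) (removelast (visited g q)).

Lemma first_hit_cons g j q :
  first_hit g (j :: q) = negb (Zpair_eqb g h) && first_hit (shape_jump g j) q.
Proof.
  unfold first_hit; simpl endpoint.
  replace (removelast (visited g (j :: q)))
    with (g :: removelast (visited (shape_jump g j) q)) by (simpl; destruct q; reflexivity).
  simpl forallb; destruct (Zpair_eqb (endpoint (shape_jump g j) q) h), (Zpair_eqb g h);
  reflexivity.
Qed.

Definition hit_prob (n : nat) (g : shape_state) : R :=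
  sumR (map (fun q => if first_hit g q then path_prob b0 b1 b2 g q else 0) (all_paths n)).

Lemma hit_prob_0 g : hit_prob 0 g = if Zpair_eqb g h then 1 else 0.
Proof. unfold hit_prob, first_hit; simpl; destruct (Zpair_eqb g h); simpl; ring. Qed.

Lemma hit_prob_S n g : hit_prob (S n) g =
  if Zpair_eqb g h then 0 else mean_step jprob (hit_prob n) g.
Proof.
  unfold hit_prob, mean_step; rewrite sumR_all_paths_S.
  destruct (Zpair_eqb g h) eqn:E.
  - rewrite (sumR_ext _ (fun p => 0 * 0)) by (intros p; rewrite !first_hit_cons, E; simpl; ring).
    rewrite sumR_scal; ring.
  - rewrite <- !sumR_scal, <- !sumR_plus. apply sumR_ext; intros p.
    rewrite !first_hit_cons, E; simpl; unfold jprob. case_ifs; ring.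
Qed.

Lemma hit_prob_surv n g : hit_prob (S n) g =
  if Zpair_eqb g h then 0 else surv jprob h n g - surv jprob h (S n) g.
Proof.
  revert g; induction n; intros g; rewrite hit_prob_S; destruct (Zpair_eqb g h); auto.
  - unfold mean_step; rewrite !hit_prob_0, surv_S; unfold kstep, killed, surv; cbn [kiter].
    pose proof (jprob_sum g). case_ifs; lra.
  - unfold mean_step; rewrite !IHn, (surv_S _ _ n g), (surv_S _ _ (S n) g).
    unfold kstep, killed; case_ifs; ring.
Qed.

(* A move from h never lands on h, so killing is invisible at the first step. *)
Lemma kstep_at_h f : kstep jprob h f h = mean_step jprob f h.
Proof. unfold kstep, mean_step, killed; rewrite !jump_neq by auto; reflexivity. Qed.

Lemma ret_prob_S n : ret_prob b0 b1 b2 h (S n) = surv jprob h n h - surv jprob h (S n) h.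
Proof.
  assert (E : ret_prob b0 b1 b2 h (S n) = mean_step jprob (hit_prob n) h).
  { unfold ret_prob, hit_prob, mean_step; rewrite sumR_all_paths_S.
    rewrite <- !sumR_scal, <- !sumR_plus; apply sumR_ext; intros p.
    change (first_return h (?j :: p)) with (first_hit (shape_jump h j) p).
    simpl path_prob; unfold jprob; case_ifs; ring. }
  rewrite E, surv_S, kstep_at_h; unfold mean_step.
  destruct n.
  - rewrite !hit_prob_0, !jump_neq by auto; unfold surv; simpl.
    pose proof (jprob_sum h); lra.
  - rewrite !hit_prob_surv, !jump_neq by auto.
    rewrite (surv_S _ _ n h), kstep_at_h; unfold mean_step; ring.
Qed.

Lemma sum_ret_prob N : sum_f_R0 (ret_prob b0 b1 b2 h) N = 1 - surv jprob h N h.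
Proof.
  induction N; simpl.
  - unfold ret_prob, surv; simpl; ring.
  - rewrite IHN, ret_prob_S; ring.
Qed.

Lemma weighted_ret_prob N :
  sum_f_R0 (fun n => INR n * ret_prob b0 b1 b2 h n) N + INR N * surv jprob h N h
  = tmean jprob h N h.
Proof.
  induction N; [simpl; ring|].
  change (sum_f_R0 ?f (S N)) with (sum_f_R0 f N + f (S N)); cbv beta.
  rewrite ret_prob_S.
  change (tmean jprob h (S N) h) with (tmean jprob h N h + surv jprob h N h).
  rewrite <- IHN, S_INR; ring.
Qed.

Lemma ret_time_bound n :
  0 <= ret_time b0 b1 b2 h n <= / (3 * b0) * (INR n * ret_prob b0 b1 b2 h n).
Proof.
  split.
  - unfold ret_time; apply sumR_nonneg; intros p; destruct (first_return h p); [|lra].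
    apply Rmult_le_pos; [apply path_prob_nonneg | apply path_time_bound].
  - unfold ret_time, ret_prob; rewrite <- !sumR_scal.
    apply sumR_le; intros p Hp; apply all_paths_length in Hp.
    destruct (first_return h p); [|lra].
    pose proof (path_prob_nonneg h p); pose proof (path_time_bound h p).
    rewrite Hp in *. unfold Rdiv in *. nra.
Qed.

Lemma cv_0_of_harmonic_bound (u : nat -> R) (C : R) :
  (forall n, 0 <= u n) -> (forall n, INR (S n) * u n <= C) -> Un_cv u 0.
Proof.
  intros Hu HC eps Heps.
  assert (HC0 : 0 <= C) by (pose proof (HC 0%nat); pose proof (Hu 0%nat); simpl in *; lra).
  assert (He : 0 < eps / (C + 1)) by (apply Rdiv_lt_0_compat; lra).
  destruct (archimed_cor1 _ He) as [N0 [HN0 HN0pos]].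
  exists N0; intros n Hn; unfold R_dist; rewrite Rminus_0_r, Rabs_pos_eq by apply Hu.
  assert (HN : 0 < INR N0 <= INR (S n)) by (split; [apply lt_0_INR | apply le_INR]; lia).
  assert (Hinv : 1 < eps / (C + 1) * INR N0).
  { apply (Rmult_lt_compat_r (INR N0)) in HN0; [|lra]. rewrite Rinv_l in HN0; lra. }
  assert (Heq : eps / (C + 1) * (C + 1) = eps) by (field; lra).
  pose proof (HC n); pose proof (Hu n).
  assert (u n * INR N0 <= C) by nra.
  nra.
Qed.

Lemma positive_recurrent_of_bounded_tmean C :
  (forall N, tmean jprob h N h <= C) -> positive_recurrent_state b0 b1 b2 h.
Proof.
  intros HC; split.
  - assert (Hsurv : Un_cv (fun N => surv jprob h N h) 0).
    { apply (cv_0_of_harmonic_bound _ C); [intros; apply surv_bound, jprob_sum; apply jprob_nonneg|].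
      intros n; eapply Rle_trans; [apply surv_le_tmean; [apply jprob_nonneg | apply jprob_sum]|].
      apply HC. }
    intros eps Heps; destruct (Hsurv eps Heps) as [N0 HN0]; exists N0; intros n Hn.
    specialize (HN0 n Hn); unfold R_dist in *; rewrite sum_ret_prob.
    replace (1 - surv jprob h n h - 1) with (- (surv jprob h n h - 0)) by ring.
    rewrite Rabs_Ropp; exact HN0.
  - destruct (growing_cv (fun N => sum_f_R0 (ret_time b0 b1 b2 h) N)) as [m Hm].
    + intros n; simpl; pose proof (ret_time_bound (S n)); lra.
    + exists (/ (3 * b0) * C); intros x [N ->].
      apply Rle_trans with (/ (3 * b0) * sum_f_R0 (fun n => INR n * ret_prob b0 b1 b2 h n) N).
      * induction N; simpl; [apply ret_time_bound|].
        rewrite Rmult_plus_distr_l; apply Rplus_le_compat; [exact IHN | apply ret_time_bound].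
      * apply Rmult_le_compat_l; [left; apply Rinv_0_lt_compat; lra|].
        pose proof (weighted_ret_prob N); pose proof (HC N).
        pose proof (pos_INR N); pose proof (surv_bound jprob jprob_nonneg jprob_sum h N h).
        nra.
    + exists m; exact Hm.
Qed.

End ReturnTimes.

End CrystalRates.

Theorem corollary7 (b0 b1 b2 : R) :
  0 < b0 -> 0 < b1 -> 0 < b2 ->
  b1 > b0 -> b2 > b0 ->
  shape_positive_recurrent b0 b1 b2.
Proof.
  intros Hb0 _ _ Hb1 Hb2 h.
  destruct (tmean_bounded b0 b1 b2 Hb0 Hb1 Hb2 h) as [C HC].
  exact (positive_recurrent_of_bounded_tmean b0 b1 b2 Hb0 Hb1 Hb2 h C HC).
Qed.
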